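(* Let $\underline A=(A_1,\dots,A_m)\in\mathcal C_k(d)$ with $\Theta_k(\underline A)>0$. For $1\le i\le m$ let $R_i:=\mathrm{Range}(A_i)$ and let $M_i$ be a real $d\times k$ matrix with $M_i^tM_i=I_k$ and $\mathrm{Range}(M_i)=R_i$. Define $C_{i,j}:=M_i^tA_iM_j$ for $1\le i,j\le m$. Then for all $1\le i,j\le m$: (1) $C_{i,j}\in\mathrm{GL}(k,\mathbb R)$; (2) $M_iC_{i,j}=A_iM_j$.
   Context: Fix integers $m,d\ge1$ and $1\le k\le d$. $\mathcal C_k(d)$ is the set of tuples $\underline A=(A_1,\dots,A_m)\in{\rm Mat}(d,\mathbb R)^m$ with $\mathrm{rank}(A_j)=k$ for all $j$. $\Theta_k(\underline A):=\min\{\|\wedge_k(A_aA_b)\|:1\le a,b\le m\}$, where $\wedge_kA$ is the $k$-th exterior power of a matrix $A$ (the matrix of its $k\times k$ minors); thus $\Theta_k(\underline A)>0$ means $\mathrm{rank}(A_aA_b)=k$ for all $a,b$. *)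

From HB Require Import structures.
From mathcomp Require Import all_boot all_order all_algebra.
From mathcomp Require Export reals.
From mathcomp Require Export all_boot all_order all_algebra.
Set Implicit Arguments. Unset Strict Implicit. Unset Printing Implicit Defensive.
Import Order.TTheory GRing.Theory Num.Theory.
Local Open Scope ring_scope.

(* The i-th element (in increasing order) of a k-subset S of 'I_d;
   the default value is irrelevant when #|S| = k. *)
Definition ksub_idx (d k : nat) (hk : (k <= d)%N) (S : {set 'I_d}) (i : 'I_k)
  : 'I_d := nth (widen_ord hk i) (enum S) i.

Definition kminor (R : realType) (d k : nat) (hk : (k <= d)%N)
  (A : 'M[R]_d) (S T : {set 'I_d}) : R :=
  \det (\matrix_(i < k, j < k) A (ksub_idx hk S i) (ksub_idx hk T j)).

(* || wedge_k A || : norm (max-abs of the entries) of the k-th exterior power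
   of A, whose entries are the k x k minors of A indexed by pairs of k-subsets. *)
Definition wedge_norm (R : realType) (d k : nat) (hk : (k <= d)%N)
  (A : 'M[R]_d) : R :=
  \big[Num.max/0]_(S : {set 'I_d} | #|S| == k)
     \big[Num.max/0]_(T : {set 'I_d} | #|T| == k) `|kminor hk A S T|.

(* Theta_k(A_1,...,A_m) = min_{a,b} || wedge_k (A_a A_b) || (0 if m = 0). *)
Definition Theta (R : realType) (m d k : nat) (hk : (k <= d)%N)
  (A : 'I_m -> 'M[R]_d) : R :=
  let l := [seq wedge_norm hk (A a *m A b) | a <- enum 'I_m, b <- enum 'I_m] in
  foldr Num.min (head 0 l) l.

Definition in_Ck (R : realType) (m d : nat) (k : nat) (A : 'I_m -> 'M[R]_d) : Prop :=
  forall j, \rank (A j) = k.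

Import Order.TTheory GRing.Theory Num.Theory.
Local Open Scope ring_scope.

(* Since M_i^t M_i = 1 and Range M_i = Range A_i, the product M_i M_i^t is the
   orthogonal projection onto Range A_i, so it fixes A_i; this gives
   M_i C_ij = A_i M_j.  Consequently A_i A_j = (M_i M_i^t A_i)(M_j M_j^t A_j)
   = M_i C_ij (M_j^t A_j), so rank C_ij >= rank (A_i A_j), and
   Theta_k > 0 makes the latter at least k: the k x k matrix C_ij is
   invertible. *)

Lemma mxrank_mxsub (F : fieldType) m n m' n' (f : 'I_m' -> 'I_m)
    (g : 'I_n' -> 'I_n) (B : 'M[F]_(m, n)) :
  (\rank (mxsub f g B) <= \rank B)%N.
Proof.
have -> : mxsub f g B = rowsub f 1%:M *m B *m colsub g 1%:M.
  by rewrite -mulmxA mulmx_colsub mulmx1 -mxsub_mul mul1mx.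
exact: leq_trans (mxrankM_maxl _ _) (mxrankM_maxr _ _).
Qed.

Lemma kminor_neq0_rank (R : realType) d k (hk : (k <= d)%N) (B : 'M[R]_d) S T :
  kminor hk B S T != 0 -> (k <= \rank B)%N.
Proof.
rewrite /kminor -unitfE -unitmxE => /mxrank_unit <-.
by rewrite -[\matrix_(i, j) _]/(mxsub _ _ B) mxrank_mxsub.
Qed.

Lemma wedge_norm_gt0_rank (R : realType) d k (hk : (k <= d)%N) (B : 'M[R]_d) :
  0 < wedge_norm hk B -> (k <= \rank B)%N.
Proof.
rewrite /wedge_norm; elim/big_ind: _ => [|x y IHx IHy|S _]; first by rewrite ltxx.
  by rewrite lt_max => /orP[/IHx|/IHy].
elim/big_ind: _ => [|x y IHx IHy|T _]; first by rewrite ltxx.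
  by rewrite lt_max => /orP[/IHx|/IHy].
by rewrite normr_gt0 => /kminor_neq0_rank.
Qed.

Lemma foldr_min_le (R : realDomainType) (x y : R) (s : seq R) :
  y \in s -> foldr Num.min x s <= y.
Proof.
elim: s => // a s IHs; rewrite inE ge_min => /orP[/eqP <-|/IHs ->].
  by rewrite lexx.
by rewrite orbT.
Qed.

Lemma Theta_le_wedge_norm (R : realType) m d k (hk : (k <= d)%N)
    (A : 'I_m -> 'M[R]_d) a b :
  Theta hk A <= wedge_norm hk (A a *m A b).
Proof. by apply: foldr_min_le; apply: allpairs_f; rewrite mem_enum. Qed.

Lemma orth_proj_fix (F : fieldType) d k n (M : 'M[F]_(d, k)) (A : 'M[F]_(d, n)) :
  M^T *m M = 1%:M -> (A^T <= M^T)%MS -> M *m M^T *m A = A.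
Proof.
move=> MTM /submxP[X defAT].
have -> : A = M *m X^T by rewrite -[A]trmxK defAT trmx_mul trmxK.
by rewrite -mulmxA (mulmxA M^T) MTM mul1mx.
Qed.

Theorem lemma4p4 (R : realType) (m d k : nat) (hm : (1 <= m)%N) (hd : (1 <= d)%N)
  (hk1 : (1 <= k)%N) (hk : (k <= d)%N)
  (A : 'I_m -> 'M[R]_d) (M : 'I_m -> 'M[R]_(d, k)) :
  in_Ck k A ->
  0 < Theta hk A ->
  (forall i, (M i)^T *m M i = 1%:M) ->
  (forall i, ((M i)^T :=: (A i)^T)%MS) ->
  forall i j : 'I_m,
    let C := (M i)^T *m A i *m M j in
    C \in unitmx /\ M i *m C = A i *m M j.
Proof.
move=> _ Theta_gt0 MTM rangeM i j C.
have projA l : M l *m (M l)^T *m A l = A l.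
  by rewrite orth_proj_fix // rangeM.
have MC : M i *m C = A i *m M j by rewrite /C !mulmxA projA.
split=> //.
have AA : A i *m A j = M i *m C *m ((M j)^T *m A j).
  by rewrite MC -mulmxA (mulmxA (M j)) projA.
have rank_AA : (k <= \rank (A i *m A j))%N.
  exact/wedge_norm_gt0_rank/(lt_le_trans Theta_gt0)/Theta_le_wedge_norm.
rewrite -row_free_unit /row_free eqn_leq rank_leq_row /=.
rewrite (leq_trans rank_AA) // AA.
exact: leq_trans (mxrankM_maxl _ _) (mxrankM_maxr _ _).
Qed.
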